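(* Let $\mathcal{M}=(W,\leq,R,V^+,V^-)$ be a Nelsonian conditional model and define $\mathcal{M}^i=(W^i,\leq^i,R^i,V^i)$ by: $W^i:=W\cup R$; $\leq^i:=\leq\cup\{((w,(X,Y),v),(w',(X,Y),v'))\mid w\leq w',\,v\leq v'\}$ (for triples in $R$); $R^i:=\{(w,X',(w,(X,Y),v)),((w,(X,Y),v),Y',v)\mid (w,(X,Y),v)\in R,\,X'\cap W=X,\,Y'\cap W=Y\}$; $V^i(p_i):=V^+(p_i)$ and $V^i(q_i):=V^-(p_i)$. Then (1) $\mathcal{M}^i$ is an extended conditional intuitionistic model, and (2) for every $w\in W$ and every $\phi\in\mathcal{L}_{\Box\!\!\rightarrow}$, $\mathcal{M},w\models^+\phi$ iff $\mathcal{M}^i,w\models^i E^\pm(\phi)$.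
   Context: $\mathcal{L}_{\Box\!\!\rightarrow}$ is built from variables $p_0,p_1,\dots$ with $\wedge,\vee,\to$, strong negation $\sim$, and a binary would-conditional $\Box\!\!\rightarrow$. A Nelsonian conditional model is $(W,\leq,R,V^+,V^-)$ with $W\neq\emptyset$, $\leq$ a preorder, $V^\pm$ assigning upward-closed sets to variables, $R\subseteq W\times(\mathcal{P}(W)\times\mathcal{P}(W))\times W$ satisfying for all $X,Y$: (c1) $w\leq w'$ and $R_{(X,Y)}(w,v)$ imply $R_{(X,Y)}(w',v')$ for some $v'\geq v$; (c2) $R_{(X,Y)}(w,v)$ and $v\leq v'$ imply $R_{(X,Y)}(w',v')$ for some $w'\geq w$. Verification $\models^+$/falsification $\models^-$: atoms by $V^\pm$; $\wedge$ verified iff both verified, falsified iff one falsified; $\vee$ dually; $\sim$ swaps; $w\models^+\psi\to\chi$ iff for all $v\geq w$, $v\models^+\psi$ implies $v\models^+\chi$; $w\models^-\psi\to\chi$ iff $w\models^+\psi$ and $w\models^-\chi$; $w\models^+\psi\Box\!\!\rightarrow\chi$ iff for all $v\geq w$ and $u$ with $R_{\|\psi\|}(v,u)$, $u\models^+\chi$; $w\models^-\psi\Box\!\!\rightarrow\chi$ iff some $u$ has $R_{\|\psi\|}(w,u)$ and $u\models^-\chi$; $\|\psi\|=(\{w\mid w\models^+\psi\},\{w\mid w\models^-\psi\})$. The target language $\mathcal{L}^{e+}_{(\Box\!\!\rightarrow,\Diamond\!\!\rightarrow)}$ has variables $p_i$ and extra variables $q_i$, connectives $\wedge,\vee,\to$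 and primitive binary $\Box\!\!\rightarrow$, $\Diamond\!\!\rightarrow$ (no negation). An extended conditional intuitionistic model is $(W,\leq,R,V)$ with $\leq$ a preorder, $V$ assigning upward-closed sets to all $p_i,q_i$, $R\subseteq W\times\mathcal{P}(W)\times W$ such that for all $X$: if $w\leq w'$ and $R_X(w,v)$ then $R_X(w',v')$ for some $v'\geq v$; if $R_X(w,v)$ and $v\leq v'$ then $R_X(w',v')$ for some $w'\geq w$. $\models^i$: atoms by $V$; $\wedge,\vee$ classical at a point; $w\models^i\psi\to\chi$ iff for all $v\geq w$, $v\models^i\psi$ implies $v\models^i\chi$; $w\models^i\psi\Box\!\!\rightarrow\chi$ iff for all $v\geq w$ and $u$ with $R_{\|\psi\|^i}(v,u)$, $u\models^i\chi$; $w\models^i\psi\Diamond\!\!\rightarrow\chi$ iff some $u$ has $R_{\|\psi\|^i}(w,u)$ and $u\models^i\chi$; $\|\psi\|^i=\{w\mid w\models^i\psi\}$. The translation $E^\pm$: $E^\pm(p_i)=p_i$, $E^\pm(\sim p_i)=q_i$, $E^\pm(\phi\wedge\psi)=E^\pm(\phi)\wedge E^\pm(\psi)$, $E^\pm(\sim(\phi\wedge\psi))=E^\pm(\sim\phi)\vee E^\pm(\sim\psi)$, $E^\pm(\phi\vee\psi)=E^\pm(\phi)\vee E^\pm(\psi)$, $E^\pm(\sim(\phi\vee\psi))=E^\pm(\sim\phi)\wedge E^\pm(\sim\psi)$, $E^\pm(\sim\sim\phi)=E^\pm(\phi)$, $E^\pm(\phi\to\psi)=E^\pm(\phi)\to E^\pm(\psi)$,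 $E^\pm(\sim(\phi\to\psi))=E^\pm(\phi)\wedge E^\pm(\sim\psi)$, $E^\pm(\phi\Box\!\!\rightarrow\psi)=E^\pm(\phi)\Box\!\!\rightarrow(E^\pm(\sim\phi)\Box\!\!\rightarrow E^\pm(\psi))$, $E^\pm(\sim(\phi\Box\!\!\rightarrow\psi))=E^\pm(\phi)\Diamond\!\!\rightarrow(E^\pm(\sim\phi)\Diamond\!\!\rightarrow E^\pm(\sim\psi))$. *)

From Stdlib Require Import RelationClasses.
Set Implicit Arguments.

Inductive nform : Type :=
| NVar : nat -> nform
| NNeg : nform -> nform
| NAnd : nform -> nform -> nform
| NOr  : nform -> nform -> nform
| NImp : nform -> nform -> nform
| NBox : nform -> nform -> nform.

Inductive iform : Type :=
| IP : nat -> iform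
| IQ : nat -> iform
| IAnd : iform -> iform -> iform
| IOr  : iform -> iform -> iform
| IImp : iform -> iform -> iform
| IBox : iform -> iform -> iform
| IDia : iform -> iform -> iform.

Definition upclosed (W : Type) (le : W -> W -> Prop) (A : W -> Prop) : Prop :=
  forall w w', le w w' -> A w -> A w'.

(* R : W -> (P(W) x P(W)) -> W -> Prop,  R w (X,Y) v  means R_{(X,Y)}(w,v) *)
Definition NCM (W : Type) (le : W -> W -> Prop)
    (R : W -> (W -> Prop) * (W -> Prop) -> W -> Prop)
    (Vp Vn : nat -> W -> Prop) : Prop :=
  inhabited W /\ PreOrder le /\
  (forall n, upclosed le (Vp n)) /\ (forall n, upclosed le (Vn n)) /\
  (forall XY w w' v, le w w' -> R w XY v -> exists v', le v v' /\ R w' XY v') /\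
  (forall XY w v v', R w XY v -> le v v' -> exists w', le w w' /\ R w' XY v').

(* Verification / falsification: nsem phi = (||phi||^+, ||phi||^-) = ||phi|| *)
Fixpoint nsem (W : Type) (le : W -> W -> Prop)
    (R : W -> (W -> Prop) * (W -> Prop) -> W -> Prop)
    (Vp Vn : nat -> W -> Prop) (phi : nform) : (W -> Prop) * (W -> Prop) :=
  match phi with
  | NVar n => (Vp n, Vn n)
  | NNeg a => let A := nsem le R Vp Vn a in (snd A, fst A)
  | NAnd a b => let A := nsem le R Vp Vn a in let B := nsem le R Vp Vn b in
      (fun w => fst A w /\ fst B w, fun w => snd A w \/ snd B w)
  | NOr a b => let A := nsem le R Vp Vn a in let B := nsem le R Vp Vn b in
      (fun w => fst A w \/ fst B w, fun w => snd A w /\ snd B w)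
  | NImp a b => let A := nsem le R Vp Vn a in let B := nsem le R Vp Vn b in
      (fun w => forall v, le w v -> fst A v -> fst B v,
       fun w => fst A w /\ snd B w)
  | NBox a b => let A := nsem le R Vp Vn a in let B := nsem le R Vp Vn b in
      (fun w => forall v u, le w v -> R v A u -> fst B u,
       fun w => exists u, R w A u /\ snd B u)
  end.

Definition ECIM (W : Type) (le : W -> W -> Prop)
    (R : W -> (W -> Prop) -> W -> Prop) (V : iform -> W -> Prop) : Prop :=
  PreOrder le /\
  (forall n, upclosed le (V (IP n))) /\ (forall n, upclosed le (V (IQ n))) /\
  (forall X w w' v, le w w' -> R w X v -> exists v', le v v' /\ R w' X v') /\
  (forall X w v v', R w X v -> le v v' -> exists w', le w w' /\ R w' X v').

Fixpoint isem (W : Type) (le : W -> W -> Prop)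
    (R : W -> (W -> Prop) -> W -> Prop) (V : iform -> W -> Prop)
    (phi : iform) : W -> Prop :=
  match phi with
  | IP n => V (IP n)
  | IQ n => V (IQ n)
  | IAnd a b => fun w => isem le R V a w /\ isem le R V b w
  | IOr a b => fun w => isem le R V a w \/ isem le R V b w
  | IImp a b => fun w => forall v, le w v -> isem le R V a v -> isem le R V b v
  | IBox a b => fun w => forall v u, le w v -> R v (isem le R V a) u ->
                           isem le R V b u
  | IDia a b => fun w => exists u, R w (isem le R V a) u /\ isem le R V b u
  end.

(* Etr phi = (E^{+-}(phi), E^{+-}(~phi)); defined by structural recursion,
   unfolding the clauses of the paper (E(~~phi) = E(phi) gives the swap). *)
Fixpoint Etr (phi : nform) : iform * iform :=
  match phi with
  | NVar n => (IP n, IQ n)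
  | NNeg a => let A := Etr a in (snd A, fst A)
  | NAnd a b => let A := Etr a in let B := Etr b in
      (IAnd (fst A) (fst B), IOr (snd A) (snd B))
  | NOr a b => let A := Etr a in let B := Etr b in
      (IOr (fst A) (fst B), IAnd (snd A) (snd B))
  | NImp a b => let A := Etr a in let B := Etr b in
      (IImp (fst A) (fst B), IAnd (fst A) (snd B))
  | NBox a b => let A := Etr a in let B := Etr b in
      (IBox (fst A) (IBox (snd A) (fst B)), IDia (fst A) (IDia (snd A) (snd B)))
  end.

Definition E (phi : nform) : iform := fst (Etr phi).

Section Mi.
Variables (W : Type) (le : W -> W -> Prop)
  (R : W -> (W -> Prop) * (W -> Prop) -> W -> Prop)
  (Vp Vn : nat -> W -> Prop).

Record Rtriple : Type := mkRt {
  rt_w : W; rt_X : W -> Prop; rt_Y : W -> Prop; rt_v : W;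
  rt_R : R rt_w (rt_X, rt_Y) rt_v }.

Definition Wi : Type := (W + Rtriple)%type.

Definition lei (a b : Wi) : Prop :=
  match a, b with
  | inl w, inl w' => le w w'
  | inr t, inr t' => rt_X t = rt_X t' /\ rt_Y t = rt_Y t' /\
                     le (rt_w t) (rt_w t') /\ le (rt_v t) (rt_v t')
  | _, _ => False
  end.

(* X' \cap W, viewing W inside W^i *)
Definition capW (X' : Wi -> Prop) : W -> Prop := fun w => X' (inl w).

Definition Ri (a : Wi) (X' : Wi -> Prop) (b : Wi) : Prop :=
  exists t : Rtriple,
    (a = inl (rt_w t) /\ b = inr t /\ capW X' = rt_X t) \/
    (a = inr t /\ b = inl (rt_v t) /\ capW X' = rt_Y t).

Definition Vi (x : iform) (a : Wi) : Prop :=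
  match x, a with
  | IP n, inl w => Vp n w
  | IQ n, inl w => Vn n w
  | _, _ => False
  end.
End Mi.

(* A triple t = (w,(X,Y),v) of R becomes a point of M^i lying between w and v,
   so a two-step R^i-path from w through t back into W, labelled X' and Y',
   is exactly an R-step from w to v labelled (X' ∩ W, Y' ∩ W).  Hence on W the
   nested conditionals of E(φ □→ ψ) and E(~(φ □→ ψ)) evaluate exactly like the
   clauses of □→, and a simultaneous induction shows that ||φ|| is the trace on
   W of the truth sets of (E(φ), E(~φ)).  The frame conditions of M^i are
   inherited from those of M on the W-to-triple steps and hold trivially on
   the triple-to-W steps. *)
From Stdlib Require Import RelationClasses FunctionalExtensionality PropExtensionality.

Lemma pred_ext (T : Type) (A B : T -> Prop) : (forall x, A x <-> B x) -> A = B.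
Proof.
  intro AB. apply functional_extensionality; intro x.
  apply propositional_extensionality, AB.
Qed.

Section Mi_model.
Variables (W : Type) (le : W -> W -> Prop)
  (R : W -> (W -> Prop) * (W -> Prop) -> W -> Prop)
  (Vp Vn : nat -> W -> Prop).

Local Notation leI := (@lei W le R).
Local Notation RI := (@Ri W R).
Local Notation VI := (@Vi W R Vp Vn).
Local Notation sem := (isem leI RI VI).
Local Notation triple HR := (@mkRt W R _ _ _ _ HR).

Lemma lei_preorder : PreOrder le -> PreOrder leI.
Proof.
  intros [le_refl le_trans]. split.
  - intros [w|t]; simpl; auto.
  - intros [w|t] [w'|t'] [w''|t'']; simpl; try tauto; [eauto|].
    intros (X1 & Y1 & w1 & v1) (X2 & Y2 & w2 & v2).
    repeat split; try congruence; eauto.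
Qed.

Lemma Vi_IP_upclosed n : upclosed le (Vp n) -> upclosed leI (VI (IP n)).
Proof. intros Hn [w|t] [w'|t']; simpl; try tauto. apply Hn. Qed.

Lemma Vi_IQ_upclosed n : upclosed le (Vn n) -> upclosed leI (VI (IQ n)).
Proof. intros Hn [w|t] [w'|t']; simpl; try tauto. apply Hn. Qed.

Lemma Ri_inlE w X b :
  RI (inl w) X b <-> exists t, b = inr t /\ rt_w t = w /\ rt_X t = capW X.
Proof.
  split.
  - intros [t [(Ew & Eb & EX) | (Ew & _)]]; [|discriminate].
    injection Ew as Ew. eauto.
  - intros (t & Eb & Ew & EX). exists t. left. subst. auto.
Qed.

Lemma Ri_inrE t Y b : RI (inr t) Y b <-> b = inl (rt_v t) /\ rt_Y t = capW Y.
Proof.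
  split.
  - intros [t' [(Et & _) | (Et & Eb & EY)]]; [discriminate|].
    injection Et as Et. subst. auto.
  - intros [Eb EY]. exists t. right. subst. auto.
Qed.

Lemma Ri_two_step w X Y b :
  (exists x, RI (inl w) X x /\ RI x Y b) <->
  exists u, b = inl u /\ R w (capW X, capW Y) u.
Proof.
  split.
  - intros (x & Hwx & Hxb).
    apply Ri_inlE in Hwx as (t & -> & <- & <-).
    apply Ri_inrE in Hxb as [-> <-].
    exists (rt_v t). split; [reflexivity | exact (rt_R t)].
  - intros (u & -> & HR).
    exists (inr (triple HR)). split.
    + apply Ri_inlE. eexists; eauto.
    + apply Ri_inrE. auto.
Qed.

Lemma Ri_forth :
  (forall XY w w' v, le w w' -> R w XY v -> exists v', le v v' /\ R w' XY v') ->
  forall X a a' b, leI a a' -> RI a X b -> exists b', leI b b' /\ RI a' X b'.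
Proof.
  intros forth X a a' b Ha [t [(-> & -> & EX) | (-> & -> & EY)]].
  - destruct a' as [w'|t']; simpl in Ha; [|contradiction].
    destruct (forth _ _ _ _ Ha (rt_R t)) as (v' & Hv & HR).
    exists (inr (triple HR)). split.
    + simpl. auto.
    + apply Ri_inlE. eexists; eauto.
  - destruct a' as [w'|t']; simpl in Ha; [contradiction|].
    destruct Ha as (EX & EY' & _ & Hv).
    exists (inl (rt_v t')). split; [exact Hv|].
    apply Ri_inrE. split; congruence.
Qed.

Lemma Ri_back :
  (forall XY w v v', R w XY v -> le v v' -> exists w', le w w' /\ R w' XY v') ->
  forall X a b b', RI a X b -> leI b b' -> exists a', leI a a' /\ RI a' X b'.
Proof.
  intros back X a b b' [t [(-> & -> & EX) | (-> & -> & EY)]] Hb.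
  - destruct b' as [w'|t']; simpl in Hb; [contradiction|].
    destruct Hb as (EX' & _ & Hw & _).
    exists (inl (rt_w t')). split; [exact Hw|].
    apply Ri_inlE. eexists; split; [reflexivity | split; congruence].
  - destruct b' as [v'|t']; simpl in Hb; [|contradiction].
    destruct (back _ _ _ _ (rt_R t) Hb) as (w' & Hw & HR).
    exists (inr (triple HR)). split.
    + simpl. auto.
    + apply Ri_inrE. auto.
Qed.

Lemma Mi_ECIM : NCM le R Vp Vn -> ECIM leI RI VI.
Proof.
  intros (_ & le_pre & HVp & HVn & forth & back).
  repeat split.
  - apply lei_preorder, le_pre.
  - apply lei_preorder, le_pre.
  - intro n. apply Vi_IP_upclosed, HVp.
  - intro n. apply Vi_IQ_upclosed, HVn.
  - exact (Ri_forth forth).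
  - exact (Ri_back back).
Qed.

Lemma isem_Imp_inl A B w :
  sem (IImp A B) (inl w) <->
  forall v, le w v -> sem A (inl v) -> sem B (inl v).
Proof.
  simpl. split.
  - intros H v. apply (H (inl v)).
  - intros H [v|t] Hv; [apply H, Hv | contradiction].
Qed.

Lemma isem_Dia_Dia_inl A B C w :
  sem (IDia A (IDia B C)) (inl w) <->
  exists u, R w (capW (sem A), capW (sem B)) u /\ sem C (inl u).
Proof.
  simpl. split.
  - intros (x & Hwx & y & Hxy & Hy).
    assert (Hpath : exists x, RI (inl w) (sem A) x /\ RI x (sem B) y) by eauto.
    apply Ri_two_step in Hpath as (u & -> & HR).
    eauto.
  - intros (u & HR & Hu).
    destruct (proj2 (Ri_two_step w (sem A) (sem B) (inl u))
                (ex_intro _ u (conj eq_refl HR))) as (x & Hwx & Hxu).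
    eauto.
Qed.

(* Left to right instantiates the inner box at the triple itself, which needs
   reflexivity; right to left needs transitivity, since the inner box also
   ranges over triples above it. *)
Lemma isem_Box_Box_inl A B C w :
  PreOrder le ->
  sem (IBox A (IBox B C)) (inl w) <->
  forall v u, le w v -> R v (capW (sem A), capW (sem B)) u -> sem C (inl u).
Proof.
  intros [le_refl le_trans]. simpl. split.
  - intros H v u Hv HR.
    refine (H (inl v) (inr (triple HR)) Hv _ (inr (triple HR)) (inl u) _ _);
      [| simpl; auto |].
    + apply Ri_inlE. eexists; eauto.
    + apply Ri_inrE. auto.
  - intros H x y Hx Hxy c d Hc Hcd.
    destruct x as [v|t0]; simpl in Hx; [|contradiction].
    apply Ri_inlE in Hxy as (t & -> & <- & EX).
    destruct c as [v'|t']; simpl in Hc; [contradiction|].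
    destruct Hc as (EX' & _ & Hw & _).
    apply Ri_inrE in Hcd as [-> EY].
    apply (H (rt_w t') (rt_v t')); [eauto|].
    rewrite <- EX, <- EY, EX'. exact (rt_R t').
Qed.

Lemma nsem_Etr phi :
  PreOrder le ->
  nsem le R Vp Vn phi =
  (capW (sem (fst (Etr phi))), capW (sem (snd (Etr phi)))).
Proof.
  intro le_pre.
  induction phi as [n|a IHa|a IHa b IHb|a IHa b IHb|a IHa b IHb|a IHa b IHb];
    simpl; try rewrite IHa; try rewrite IHb; try reflexivity.
  - f_equal. apply pred_ext; intro w. symmetry. apply isem_Imp_inl.
  - f_equal; apply pred_ext; intro w; symmetry.
    + apply isem_Box_Box_inl, le_pre.
    + apply isem_Dia_Dia_inl.
Qed.

End Mi_model.

Theorem lemma13 (W : Type) (le : W -> W -> Prop)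
    (R : W -> (W -> Prop) * (W -> Prop) -> W -> Prop)
    (Vp Vn : nat -> W -> Prop) :
  NCM le R Vp Vn ->
  ECIM (@lei W le R) (@Ri W R) (@Vi W R Vp Vn) /\
  (forall (w : W) (phi : nform),
      fst (nsem le R Vp Vn phi) w <->
      isem (@lei W le R) (@Ri W R) (@Vi W R Vp Vn) (E phi) (inl w)).
Proof.
  intro HM. split.
  - apply Mi_ECIM, HM.
  - intros w phi. destruct HM as (_ & le_pre & _).
    rewrite nsem_Etr by exact le_pre. reflexivity.
Qed.
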